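(* Let $\mathcal{B}\subseteq\{1,2\}^3$ be a basic set, with associated SNRE sequences $(a_n),(b_n)$ and $S_2$-SFT $X^{\mathcal{B}}$. If $a_1=b_1$, then $h(X^{\mathcal{B}})=\frac12\ln a_1$.
   Context: $S_2$ is the free semigroup on two generators, identified with the set of finite words over $\{1,2\}$ (the binary tree with root the empty word $\epsilon$). The alphabet is $\mathcal{A}=\{1,2\}$. A basic set $\mathcal{B}\subseteq\mathcal{A}^3$ is a set of admissible 2-blocks $(i,i_1,i_2)$; $X^{\mathcal{B}}$ is the associated $S_2$-SFT. For $n\ge0$, $B_n(X^{\mathcal{B}})$ is the set of maps $u$ from words of length $\le n$ to $\mathcal{A}$ with $(u(w),u(w1),u(w2))\in\mathcal{B}$ for all words $w$ of length $\le n-1$; $a_n$ (resp. $b_n$) is the number of such $u$ with $u(\epsilon)=1$ (resp. $2$). Equivalently $a_0=b_0=1$, $a_n=F^{(a)}(a_{n-1},b_{n-1})$, $b_n=F^{(b)}(a_{n-1},b_{n-1})$ where $F^{(a)}(x,y)=\sum_{(1,i,j)\in\mathcal{B}}z_iz_j$, $F^{(b)}(x,y)=\sum_{(2,i,j)\in\mathcal{B}}z_iz_j$ with $z_1=x,z_2=y$; this is the SNRE of $X^{\mathcal{B}}$. The set $E_n$ of elements of length $\le n$ has $|E_n|=2^{n+1}-1$, and the entropy is $h(X^{\mathcal{B}})=\limsup_{n\to\infty}\frac{\ln|B_n(X^{\mathcal{B}})|}{|E_n|}=\limsup_{n\to\infty}\frac{\ln(a_n+b_n)}{2^{n+1}-1}$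 (this limsup is known to be a limit). *)

From HB Require Import structures.
From mathcomp Require Import all_boot all_order all_algebra.
From mathcomp Require Import all_classical all_reals all_analysis.
Set Implicit Arguments. Unset Strict Implicit. Unset Printing Implicit Defensive.
Import Order.TTheory GRing.Theory Num.Theory.
Local Open Scope ring_scope.

(* Alphabet A = {1,2}, symbols are the naturals 1 and 2.
   A basic set is a boolean predicate on triples (i, i1, i2);
   the hypothesis that it is contained in A^3 is stated separately. *)
Definition basic_set := nat -> nat -> nat -> bool.

Definition in_A3 (B : basic_set) : Prop :=
  forall i i1 i2, B i i1 i2 -> [/\ i \in [:: 1; 2], i1 \in [:: 1; 2] & i2 \in [:: 1; 2]]%N.

Definition zvar (x y : nat) (i : nat) : nat := if i == 1%N then x else y.

Definition SNRE_F (B : basic_set) (c : nat) (x y : nat) : nat :=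
  \sum_(i <- [:: 1; 2]%N) \sum_(j <- [:: 1; 2]%N)
     (B c i j) * (zvar x y i * zvar x y j).

Fixpoint SNRE_ab (B : basic_set) (n : nat) : nat * nat :=
  match n with
  | 0 => (1, 1)%N
  | m.+1 => let: (a, b) := SNRE_ab B m in (SNRE_F B 1 a b, SNRE_F B 2 a b)
  end.

Definition SNRE_a B n := (SNRE_ab B n).1.
Definition SNRE_b B n := (SNRE_ab B n).2.

Definition lnE {R : realType} (k : nat) : \bar R :=
  if k == 0%N then (-oo)%E else (ln (k%:R : R))%:E.

Definition entropy {R : realType} (B : basic_set) : \bar R :=
  limn_esup (fun n => (lnE (SNRE_a B n + SNRE_b B n) *
                       ((2 ^ n.+1 - 1)%N%:R^-1 : R)%:E)%E).

(** When [a_1 = b_1 = c], both SNRE polynomials restricted to the diagonal are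
    [c x^2], so [a_n = b_n = c^(2^n - 1)] and
    [ln (a_n + b_n) / (2^(n+1) - 1) = (ln 2 + (2^n - 1) ln c) / (2 (2^n - 1) + 1)],
    which tends to [ln c / 2] (to [-oo] when [c = 0]). *)
From HB Require Import structures.
From mathcomp Require Import all_boot all_order all_algebra.
From mathcomp Require Import all_classical all_reals all_analysis.
From mathcomp Require Import zify ring.
Import Order.TTheory GRing.Theory Num.Theory.
Import numFieldNormedType.Exports.
Local Open Scope classical_set_scope.

Lemma SNRE_F_diag B c x : SNRE_F B c x x = (SNRE_F B c 1 1 * (x * x))%N.
Proof. by rewrite /SNRE_F !big_cons !big_nil /zvar /= !muln1 !addn0 !mulnDl. Qed.

Lemma expn2S_subn1 n : (2 ^ n.+1 - 1 = (2 ^ n - 1) * 2 + 1)%N.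
Proof. by rewrite expnS; have := expn_gt0 2 n; lia. Qed.

Lemma SNRE_ab_diag B n : SNRE_a B 1 = SNRE_b B 1 ->
  SNRE_ab B n = (SNRE_a B 1 ^ (2 ^ n - 1), SNRE_a B 1 ^ (2 ^ n - 1))%N.
Proof.
move=> a1_b1; elim: n => [|n IHn]; first by rewrite expn0 subnn expn0.
rewrite /= -/(SNRE_ab B n) IHn (SNRE_F_diag B 1) (SNRE_F_diag B 2).
rewrite -[SNRE_F B 1 1 1]/(SNRE_a B 1) -[SNRE_F B 2 1 1]/(SNRE_b B 1) -a1_b1.
by rewrite expn2S_subn1 expnD expnM expn1 mulnC.
Qed.

Lemma SNRE_ab_sum_diag B n : SNRE_a B 1 = SNRE_b B 1 ->
  (SNRE_a B n + SNRE_b B n = 2 * SNRE_a B 1 ^ (2 ^ n - 1))%N.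
Proof. by move=> a1_b1; rewrite /SNRE_a /SNRE_b SNRE_ab_diag //= addnn mul2n. Qed.

Section real_limits.
Variable R : realType.
Local Open Scope ring_scope.

Lemma cvg_inv_expn2S_subn1 :
  (fun n => ((2 ^ n.+1 - 1)%N%:R^-1 : R)) @ \oo --> 0.
Proof.
apply: (@squeeze_cvgr _ _ _ _ (fun=> 0) harmonic); last 2 first.
- exact: cvg_cst.
- exact: cvg_harmonic.
apply: nearW => n /=; rewrite invr_ge0 ler0n /=.
rewrite ler_pV2 ?inE ?unitfE ?ltr0n ?pnatr_eq0 ?ler_nat ?expn2S_subn1 ?addn1 //=.
by have := ltn_expl n (isT : (1 < 2)%N); lia.
Qed.

Lemma ln_mul2_expn_div (c m : nat) : (0 < c)%N ->
  ln ((2 * c ^ m)%N%:R : R) / (m * 2 + 1)%N%:R =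
  ln c%:R / 2 + (ln 2 - ln c%:R / 2) / (m * 2 + 1)%N%:R.
Proof.
move=> c_gt0; have c_gt0R : 0 < c%:R :> R by rewrite ltr0n.
have den_neq0 : (m * 2 + 1)%N%:R != 0 :> R by rewrite pnatr_eq0 addn1.
move: den_neq0; rewrite natrM natrX natrD natrM.
rewrite lnM ?posrE ?exprn_gt0 // lnXn // -[ln _ *+ m]mulr_natr.
by move: (m%:R) => k den_neq0; field.
Qed.

Lemma cvg_limn_esup (u : (\bar R)^nat) l : u @ \oo --> l -> limn_esup u = l.
Proof. by move=> ul; rewrite is_cvg_limn_esupE ?(cvg_lim _ ul) //; apply/cvg_ex; exists l. Qed.

End real_limits.

Theorem proposition2 (R : realType) (B : basic_set) :
  in_A3 B ->
  SNRE_a B 1 = SNRE_b B 1 ->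
  entropy (R := R) B = (((2 : R)^-1)%:E * lnE (SNRE_a B 1))%E.
Proof.
move=> _ a1_b1; set c := SNRE_a B 1; apply: cvg_limn_esup.
have w_gt0 n : (0 < ((2 ^ n.+1 - 1)%N%:R^-1 : R))%R.
  by rewrite invr_gt0 ltr0n expn2S_subn1 addn1.
have [c0|c_neq0] := eqVneq c 0%N.
  rewrite c0 /lnE eqxx gt0_muleNy ?lte_fin ?invr_gt0 //.
  apply: cvg_near_cst; exists 1%N => // n /= n_gt0.
  rewrite SNRE_ab_sum_diag // -/c c0 exp0n ?muln0 /lnE ?eqxx.
    by rewrite mulNyr gtr0_sg ?w_gt0 // mul1e.
  by have := ltn_expl n (isT : (1 < 2)%N); lia.
have c_gt0 : (0 < c)%N by rewrite lt0n.
set L := (ln (c%:R : R) / 2)%R.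
under eq_fun => n.
  rewrite SNRE_ab_sum_diag // -/c /lnE muln_eq0 expn_eq0 (negbTE c_neq0) /=.
  rewrite -EFinM expn2S_subn1 ln_mul2_expn_div // -expn2S_subn1.
  over.
rewrite /lnE (negbTE c_neq0) -EFinM mulrC -/L.
have L_cvg : (fun n => L + (ln 2 - L) / (2 ^ n.+1 - 1)%N%:R)%R @ \oo --> L.
  have := cvgD (cvg_cst L) (cvgMl_tmp (a := (ln 2 - L)%R) (cvg_inv_expn2S_subn1 R)).
  by rewrite mulr0 addr0; apply.
by apply: cvg_EFin; first exact: nearW.
Qed.
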